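(* In the $T$-period model described in the context, with short sales prohibitions (admissible strategies are predictable self-financing with $h_m(t)\ge 0$ for $m\ge 1$), suppose there exists a strong risk neutral nonlinear expectation: a nonempty family $\mathcal{Q}$ of probability measures on $\Omega$ with $\sup_{Q\in\mathcal{Q}}Q(\omega)>0$ for all $\omega\in\Omega$ such that for every $Q\in\mathcal{Q}$, all $0\le t\le u\le T$ and all $m=1,\dots,M$, $E_Q[S_m^*(u)\mid\mathcal{F}_t]\le S_m^*(t)$ holds $Q$-almost surely (i.e. $\sup_{Q\in\mathcal{Q}}E_Q[S_m^*(u)\mid\mathcal{F}_t]\le S_m^*(t)$). Then there is no multi-period arbitrage under model uncertainty.
   Context: Multi-period model: $\Omega=\{\omega_1,\dots,\omega_K\}$ is finite with a filtration $\mathcal{F}_0\subseteq\cdots\subseteq\mathcal{F}_T$, $\mathcal{F}_0$ trivial and $\mathcal{F}_T=2^\Omega$. $\mathcal{P}$ is a nonempty family of probability measures on $\Omega$ with $\sup_{P\in\mathcal{P}}P(\omega)>0$ for all $\omega$. Bond: $S_0(0)=1$, $S_0(t)=(1+r_1)\cdots(1+r_t)$, each $r_t\ge 0$ $\mathcal{F}_{t-1}$-measurable. Risky securities $S_m(t)$ are $\mathcal{F}_t$-measurable with $S_m(0)>0$. Discounted prices $S_m^*(t)=S_m(t)/S_0(t)$, $\Delta S_m^*(t)=S_m^*(t)-S_m^*(t-1)$. A trading strategy $H=(h(t))_{t=1}^T$, $h(t)=(h_0(t),\dots,h_M(t))$ $\mathcal{F}_{t-1}$-measurable; $V^*(0)=h_0(1)+\sum_m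 h_m(1)S_m^*(0)$, $V^*(t)=h_0(t)+\sum_m h_m(t)S_m^*(t)$. $H$ is self-financing if $[h_0(t+1)-h_0(t)]+\sum_m[h_m(t+1)-h_m(t)]S_m^*(t)=0$ for $t=1,\dots,T-1$. An admissible self-financing $H$ is a multi-period arbitrage under model uncertainty if $V^*(0)=0$, $V^*(T)\ge 0$ on $\Omega$, and $\sup_{P\in\mathcal{P}}E_P[V^*(T)]>0$. *)

From HB Require Import structures.
From mathcomp Require Import all_boot all_order all_algebra.
Set Implicit Arguments. Unset Strict Implicit. Unset Printing Implicit Defensive.
Import Order.TTheory GRing.Theory Num.Theory.
Local Open Scope ring_scope.

Section Defs.
Variables (Omega : finType) (R : realFieldType).

Definition is_sigma_algebra (G : {set {set Omega}}) : Prop :=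
  [/\ setT \in G,
      (forall A, A \in G -> ~: A \in G) &
      (forall A B, A \in G -> B \in G -> A :|: B \in G)].

Definition measurable_wrt (G : {set {set Omega}}) (X : Omega -> R) : Prop :=
  forall x : R, [set w | X w == x] \in G.

Definition is_filtration (T : nat) (F : nat -> {set {set Omega}}) : Prop :=
  [/\ (forall t, (t <= T)%N -> is_sigma_algebra (F t)),
      (forall t u, (t <= u <= T)%N -> F t \subset F u),
      F 0%N = [set set0; setT] &
      F T = setT].

Definition is_prob (P : Omega -> R) : Prop :=
  (forall w, 0 <= P w) /\ \sum_w P w = 1.

Definition expect (P : Omega -> R) (X : Omega -> R) : R := \sum_w P w * X w.

Definition atom (G : {set {set Omega}}) (w : Omega) : {set Omega} :=
  \bigcap_(A in G | w \in A) A.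

(* Conditional expectation E_Q[X | G] on a finite space (version defined on
   atoms of positive Q-mass, which is Q-a.s. unique). *)
Definition condexp (Q : Omega -> R) (G : {set {set Omega}}) (X : Omega -> R)
  (w : Omega) : R :=
  (\sum_(v in atom G w) Q v * X v) / (\sum_(v in atom G w) Q v).

Definition bond (r : nat -> Omega -> R) (t : nat) (w : Omega) : R :=
  \prod_(1 <= s < t.+1) (1 + r s w).

Definition disc (M : nat) (r : nat -> Omega -> R) (S : 'I_M -> nat -> Omega -> R)
  (m : 'I_M) (t : nat) (w : Omega) : R := S m t w / bond r t w.

(* Discounted value V^*(t) of the strategy (h0, h); V^*(0) uses h(1). *)
Definition value (M : nat) (r : nat -> Omega -> R) (S : 'I_M -> nat -> Omega -> R)
  (h0 : nat -> Omega -> R) (h : 'I_M -> nat -> Omega -> R) (t : nat) (w : Omega) : R :=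
  if t == 0%N then h0 1%N w + \sum_m h m 1%N w * disc r S m 0 w
  else h0 t w + \sum_m h m t w * disc r S m t w.

Definition admissible (T M : nat) (F : nat -> {set {set Omega}})
  (r : nat -> Omega -> R) (S : 'I_M -> nat -> Omega -> R)
  (h0 : nat -> Omega -> R) (h : 'I_M -> nat -> Omega -> R) : Prop :=
  [/\ (forall t, (1 <= t <= T)%N -> measurable_wrt (F t.-1) (h0 t)),
      (forall m t, (1 <= t <= T)%N -> measurable_wrt (F t.-1) (h m t)),
      (forall t w, (1 <= t <= T.-1)%N ->
         (h0 t.+1 w - h0 t w) + \sum_m (h m t.+1 w - h m t w) * disc r S m t w = 0) &
      (forall m t w, (1 <= t <= T)%N -> 0 <= h m t w)].

Definition arbitrage (T M : nat) (F : nat -> {set {set Omega}})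
  (r : nat -> Omega -> R) (S : 'I_M -> nat -> Omega -> R)
  (Pfam : (Omega -> R) -> Prop)
  (h0 : nat -> Omega -> R) (h : 'I_M -> nat -> Omega -> R) : Prop :=
  [/\ admissible T F r S h0 h,
      (forall w, value r S h0 h 0 w = 0),
      (forall w, 0 <= value r S h0 h T w) &
      (* sup_{P in Pfam} E_P[V^*(T)] > 0 *)
      exists2 P, Pfam P & 0 < expect P (value r S h0 h T)].

End Defs.

(* Along any admissible strategy the discounted value changes by the gains
   sum_m h_m(t+1) (S*_m(t+1) - S*_m(t)).  Since h_m(t+1) >= 0 is known at time t
   and every Q in the risk neutral family makes S*_m a supermartingale, each gain
   has nonpositive Q-expectation, so E_Q[V*(T)] <= E_Q[V*(0)] = 0.  With V*(T) >= 0
   this forces V*(T) = 0 wherever some Q charges the state, i.e. everywhere, which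
   rules out E_P[V*(T)] > 0 for every P. *)
From HB Require Import structures.
From mathcomp Require Import all_boot all_order all_algebra.
From mathcomp Require Import ring lra zify.
Import Order.TTheory GRing.Theory Num.Theory.
Set Implicit Arguments. Unset Strict Implicit.
Local Open Scope ring_scope.

Section Atoms.
Variables (Omega : finType) (R : realFieldType) (G : {set {set Omega}}).

Definition complement_closed := forall A, A \in G -> ~: A \in G.

Definition atom_const (X : Omega -> R) :=
  forall w v, v \in atom G w -> X v = X w.

Lemma mem_atom w : w \in atom G w.
Proof. by apply/bigcapP => A /andP[]. Qed.

Lemma mem_atom_event w v A : v \in atom G w -> A \in G -> w \in A -> v \in A.
Proof. by move/bigcapP => Hv AG wA; apply: Hv; rewrite AG wA. Qed.

Lemma measurable_atom_const (X : Omega -> R) :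
  measurable_wrt G X -> atom_const X.
Proof.
move=> HX w v Hv; have := mem_atom_event Hv (HX (X w)).
by rewrite !inE eqxx => /(_ isT) /eqP.
Qed.

Hypothesis HG : complement_closed.

Lemma atom_sym w v : (v \in atom G w) = (w \in atom G v).
Proof.
wlog suff: w v / v \in atom G w -> w \in atom G v.
  by move=> sym; apply/idP/idP; apply: sym.
move=> Hv; apply/bigcapP => A /andP[AG vA]; apply/negPn/negP => wA.
by have := mem_atom_event Hv (HG AG); rewrite !inE wA vA => /(_ isT).
Qed.

Lemma atom_eq w v : v \in atom G w -> atom G v = atom G w.
Proof.
have sub u x : x \in atom G u -> atom G x \subset atom G u.
  move=> Hx; apply/subsetP => y Hy; apply/bigcapP => A /andP[AG uA].
  exact: mem_atom_event Hy AG (mem_atom_event Hx AG uA).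
move=> Hv; apply/eqP; rewrite eqEsubset sub //=.
by apply: sub; rewrite -atom_sym.
Qed.

End Atoms.

Section ConditionalExpectation.
Variables (Omega : finType) (R : realFieldType) (G : {set {set Omega}}).
Variable Q : Omega -> R.
Hypothesis Q_ge0 : forall w, 0 <= Q w.

Lemma le_mass_atom w : Q w <= \sum_(v in atom G w) Q v.
Proof. by rewrite (bigD1 w) ?mem_atom //= lerDl sumr_ge0. Qed.

Hypothesis HG : complement_closed G.

(* Grouping states by atoms: each atom contributes its mass times the
   conditional mean, and atoms of mass 0 contribute nothing on either side. *)
Lemma expect_condexp (X : Omega -> R) :
  expect Q (condexp Q G X) = expect Q X.
Proof.
pose D v := \sum_(u in atom G v) Q u.
have split_atom w : Q w * condexp Q G X w =
    \sum_v (if w \in atom G v then Q w * (Q v * X v / D v) else 0).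
  rewrite -big_mkcond /= /condexp mulr_suml mulr_sumr.
  apply: eq_big => [v | v Hv]; first by rewrite atom_sym.
  by rewrite /D (atom_eq HG Hv).
rewrite /expect (eq_bigr _ (fun w _ => split_atom w)) exchange_big /=.
apply: eq_bigr => v _; rewrite -big_mkcond /= -mulr_suml -/(D v).
have [D0 | Dn0] := eqVneq (D v) 0; last by rewrite mulrCA mulfV // mulr1.
suff -> : Q v = 0 by rewrite !mul0r mulr0.
by apply/eqP; rewrite eq_le Q_ge0 andbT -D0 le_mass_atom.
Qed.

Lemma condexp_predictable_gain (h X Y : Omega -> R) w :
  atom_const G h -> atom_const G Y -> 0 < Q w ->
  condexp Q G (fun v => h v * (X v - Y v)) w = h w * (condexp Q G X w - Y w).
Proof.
move=> hc Yc Qw; have Dn0 : \sum_(v in atom G w) Q v != 0.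
  by rewrite gt_eqF // (lt_le_trans Qw) ?le_mass_atom.
rewrite /condexp (eq_bigr (fun v => h w * (Q v * X v - Y w * Q v))); last first.
  by move=> v Hv; rewrite (hc _ _ Hv) (Yc _ _ Hv); ring.
by rewrite -mulr_sumr sumrB -mulr_sumr; field.
Qed.

Lemma expect_predictable_gain_le0 (h X Y : Omega -> R) :
  (forall w, 0 <= h w) -> atom_const G h -> atom_const G Y ->
  (forall w, 0 < Q w -> condexp Q G X w <= Y w) ->
  expect Q (fun w => h w * (X w - Y w)) <= 0.
Proof.
move=> h_ge0 hc Yc superY; rewrite -expect_condexp.
apply: sumr_le0 => w _; have [Q0 | Qw] := eqVneq (Q w) 0; first by rewrite Q0 mul0r.
have {}Qw : 0 < Q w by rewrite lt_def Qw Q_ge0.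
rewrite condexp_predictable_gain // mulr_ge0_le0 ?Q_ge0 // mulr_ge0_le0 //.
by rewrite subr_le0 superY.
Qed.

End ConditionalExpectation.

Lemma expect_ge0_le0_eq0 (Omega : finType) (R : realFieldType)
    (Q X : Omega -> R) w :
  (forall v, 0 <= Q v) -> (forall v, 0 <= X v) -> expect Q X <= 0 ->
  0 < Q w -> X w = 0.
Proof.
move=> Q_ge0 X_ge0; rewrite /expect (bigD1 w) //= => EX Qw.
have : Q w * X w <= 0.
  by apply: le_trans EX; rewrite lerDl sumr_ge0 // => v _; rewrite mulr_ge0.
by rewrite pmulr_rle0 // => X_le0; apply/eqP; rewrite eq_le X_le0 X_ge0.
Qed.

Section Market.
Variables (Omega : finType) (R : realFieldType) (T M : nat).
Variables (F : nat -> {set {set Omega}}) (r : nat -> Omega -> R).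
Variable S : 'I_M -> nat -> Omega -> R.
Hypothesis F_filtration : is_filtration T F.
Hypothesis r_predictable :
  forall t, (1 <= t <= T)%N -> measurable_wrt (F t.-1) (r t).
Hypothesis S_adapted : forall m t, (t <= T)%N -> measurable_wrt (F t) (S m t).

Lemma disc_atom_const m t : (t <= T)%N -> atom_const (F t) (disc r S m t).
Proof.
have [_ F_mono _ _] := F_filtration.
move=> tT w v Hv; rewrite /disc (measurable_atom_const (S_adapted m tT) Hv).
congr (_ / _); apply: eq_big_nat => s /andP[s1 st]; congr (1 + _).
apply: measurable_atom_const Hv => x.
apply: (subsetP (F_mono s.-1 t _)); last by apply: r_predictable; lia.
by lia.
Qed.

Variables (h0 : nat -> Omega -> R) (h : 'I_M -> nat -> Omega -> R).
Hypothesis h_admissible : admissible T F r S h0 h.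

Lemma value_succ t w : (t < T)%N ->
  value r S h0 h t.+1 w = value r S h0 h t w +
    \sum_m h m t.+1 w * (disc r S m t.+1 w - disc r S m t w).
Proof.
have [_ _ self_financing _] := h_admissible.
move=> tT; rewrite (eq_bigr _ (fun m _ => mulrBr _ _ _)) sumrB.
case: t tT => [|k] kT; first by rewrite /value /=; ring.
have kT' : (1 <= k.+1 <= T.-1)%N by lia.
have := self_financing k.+1 w kT'; rewrite (eq_bigr _ (fun m _ => mulrBl _ _ _)) sumrB.
by rewrite /value /=; lra.
Qed.

Lemma expect_value_le0 (Q : Omega -> R) :
  (forall w, 0 <= Q w) ->
  (forall t u m, (t <= u <= T)%N -> forall w, 0 < Q w ->
     condexp Q (F t) (disc r S m u) w <= disc r S m t w) ->
  (forall w, value r S h0 h 0 w = 0) ->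
  forall t, (t <= T)%N -> expect Q (value r S h0 h t) <= 0.
Proof.
move=> Q_ge0 superS V0; have [F_sigma _ _ _] := F_filtration.
have [_ h_predictable _ h_ge0] := h_admissible.
elim=> [|t IH] tT; first by rewrite /expect big1 // => w _; rewrite V0 mulr0.
have tT' : (t <= T)%N by apply: ltnW.
have [_ Ft_compl _] := F_sigma t tT'.
have gains_le0 : \sum_m expect Q (fun w =>
    h m t.+1 w * (disc r S m t.+1 w - disc r S m t w)) <= 0.
  apply: sumr_le0 => m _; apply: (expect_predictable_gain_le0 Q_ge0 Ft_compl).
  - by move=> w; apply: h_ge0; rewrite tT.
  - exact: measurable_atom_const (h_predictable m t.+1 _).
  - exact: disc_atom_const.
  - by move=> w; apply: superS; rewrite leqnSn.
rewrite /expect; under eq_bigr => w _ do rewrite value_succ // mulrDr mulr_sumr.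
by rewrite big_split exchange_big /=; move: (IH tT') gains_le0; rewrite /expect; lra.
Qed.

End Market.

Theorem mainTheorem8 (Omega : finType) (R : realFieldType) (T M : nat)
  (F : nat -> {set {set Omega}})
  (r : nat -> Omega -> R) (S : 'I_M -> nat -> Omega -> R)
  (Pfam Qfam : (Omega -> R) -> Prop) :
  (0 < T)%N ->
  is_filtration T F ->
  (* the family P of probability measures *)
  (exists P, Pfam P) ->
  (forall P, Pfam P -> is_prob P) ->
  (forall w, exists2 P, Pfam P & 0 < P w) ->
  (* interest rates: r_t >= 0 and F_{t-1}-measurable *)
  (forall t w, (1 <= t <= T)%N -> 0 <= r t w) ->
  (forall t, (1 <= t <= T)%N -> measurable_wrt (F t.-1) (r t)) ->
  (* risky securities: adapted, positive initial price *)
  (forall m t, (t <= T)%N -> measurable_wrt (F t) (S m t)) ->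
  (forall m w, 0 < S m 0%N w) ->
  (* strong risk neutral nonlinear expectation Qfam *)
  (exists Q, Qfam Q) ->
  (forall Q, Qfam Q -> is_prob Q) ->
  (forall w, exists2 Q, Qfam Q & 0 < Q w) ->
  (forall Q, Qfam Q -> forall (t u : nat) (m : 'I_M), (t <= u <= T)%N ->
     forall w, 0 < Q w ->
       condexp Q (F t) (disc r S m u) w <= disc r S m t w) ->
  (* conclusion: no multi-period arbitrage under model uncertainty *)
  forall (h0 : nat -> Omega -> R) (h : 'I_M -> nat -> Omega -> R),
    ~ arbitrage T F r S Pfam h0 h.
Proof.
move=> _ F_filtration _ _ _ _ r_predictable S_adapted _ _ Q_prob Q_cover superS
  h0 h [h_admissible V0 VT_ge0 [P _ EP_gt0]].
have VT0 w : value r S h0 h T w = 0.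
  have [Q QQ Qw] := Q_cover w; have [Q_ge0 _] := Q_prob Q QQ.
  apply: (expect_ge0_le0_eq0 Q_ge0 VT_ge0 _ Qw).
  exact: (expect_value_le0 F_filtration r_predictable S_adapted h_admissible
    Q_ge0 (superS Q QQ) V0 (leqnn T)).
by move: EP_gt0; rewrite /expect big1 ?ltxx // => w _; rewrite VT0 mulr0.
Qed.
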